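(* Suppose $\mathcal W$ is a locally minimal Banach space with a Schauder basis $(e_n)$. Then $\mathcal W$, with respect to the basis $(e_n)$, is $\omega^2$-minimal.
   Context: $\mathcal W$ is locally minimal if there is a constant $K\ge1$ such that for every finite-dimensional subspace $\mathcal F\subseteq\mathcal W$ and every infinite-dimensional subspace $\mathcal Y\subseteq\mathcal W$, $\mathcal F$ embeds into $\mathcal Y$ by an isomorphism $T$ with $\|T\|\|T^{-1}\|\le K$. For sequences $(x_i)_{i\le k},(y_i)_{i\le k}$ and $K\ge1$, $(x_i)\sim_K(y_i)$ means $\frac1K\|\sum_i a_ix_i\|\le\|\sum_i a_iy_i\|\le K\|\sum_i a_ix_i\|$ for all real $a_i$. For a basic sequence $(y_n)$ and a Banach space $\mathcal Y$, $T((y_n),\mathcal Y,K)$ is the tree of all finite sequences $(v_0,\dots,v_k)$ in $\mathcal Y$, including the empty one, with $(v_0,\dots,v_k)\sim_K(y_0,\dots,y_k)$. For a well-founded tree $T$, $\rho_T(s)=\sup\{\rho_T(t)+1:s\prec t\in T\}$ ($0$ at terminal nodes) and ${\rm rank}(T)=\sup\{\rho_T(s)+1:s\in T\}$; for ill-founded $T$, ${\rm rank}(T)=\infty>\alpha$ for all ordinals $\alpha$. ${\rm Emb}((y_n),\mathcal Y)=\sup_{K\ge1}{\rm rank}(T((y_n),\mathcal Y,K))$. A space $\mathcal W$ with Schauder basis $(e_n)$ is $\beta$-minimal if for every block basis $(z_n)$ of $(e_n)$ and every infinite-dimensional closed subspace $\mathcal Y\subseteq\mathcal W$, ${\rm Emb}((z_n),\mathcal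 Y)\ge\beta$. *)

From HB Require Import structures.
From mathcomp Require Import all_boot all_order all_algebra.
From mathcomp Require Import all_classical all_reals all_analysis.
Set Implicit Arguments. Unset Strict Implicit. Unset Printing Implicit Defensive.
Import Order.TTheory GRing.Theory Num.Theory.
Import numFieldNormedType.Exports.
Local Open Scope classical_set_scope.
Local Open Scope ring_scope.

Section BanachDefs.
Variables (R : realType) (V : normedModType R).

Definition schauder_basis (e : nat -> V) : Prop :=
  forall x : V,
    (exists a : nat -> R, series (fun i => a i *: e i) @ \oo --> x) /\
    (forall a b : nat -> R,
        series (fun i => a i *: e i) @ \oo --> x ->
        series (fun i => b i *: e i) @ \oo --> x -> a = b).

Definition lin_subspace (Y : set V) : Prop :=
  Y 0 /\ (forall x y, Y x -> Y y -> Y (x + y)) /\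
  (forall (c : R) x, Y x -> Y (c *: x)).

Definition infinite_dim (Y : set V) : Prop :=
  forall n : nat, exists f : 'I_n -> V,
    (forall i, Y (f i)) /\
    (forall c : 'I_n -> R, \sum_(i < n) c i *: f i = 0 -> forall i, c i = 0).

Definition inf_dim_closed_subspace (Y : set V) : Prop :=
  lin_subspace Y /\ closed Y /\ infinite_dim Y.

Definition finite_dim_subspace (F : set V) : Prop :=
  exists (n : nat) (f : 'I_n -> V),
    F = [set x | exists c : 'I_n -> R, x = \sum_(i < n) c i *: f i].

(** F embeds into Y by an isomorphism T with ||T|| ||T^-1|| <= K
    (||T|| <= a and ||T^-1|| <= b with a * b <= K). *)
Definition K_embeds (K : R) (F Y : set V) : Prop :=
  exists (T : V -> V) (a b : R),
    (forall x y, F x -> F y -> T (x + y) = T x + T y) /\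
    (forall (c : R) x, F x -> T (c *: x) = c *: T x) /\
    (forall x, F x -> Y (T x)) /\
    0 < a /\ 0 < b /\ a * b <= K /\
    (forall x, F x -> `|T x| <= a * `|x|) /\
    (forall x, F x -> `|x| <= b * `|T x|).

Definition locally_minimal : Prop :=
  exists K : R, 1 <= K /\
    forall F Y : set V, finite_dim_subspace F -> inf_dim_closed_subspace Y ->
      K_embeds K F Y.

Definition block_basis (e z : nat -> V) : Prop :=
  exists (p : nat -> nat) (a : nat -> R),
    (forall n, (p n < p n.+1)%N) /\
    (forall n, z n = \sum_(p n <= i < p n.+1) a i *: e i) /\
    (forall n, z n != 0).

(** (v_0,...,v_k) ~_K (y_0,...,y_k), for the finite sequence s = v and the
    initial segment of y of the same length. *)
Definition equivK (K : R) (s : seq V) (y : nat -> V) : Prop :=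
  forall c : nat -> R,
    K^-1 * `|\sum_(i < size s) c i *: s`_i| <= `|\sum_(i < size s) c i *: y i| /\
    `|\sum_(i < size s) c i *: y i| <= K * `|\sum_(i < size s) c i *: s`_i|.

Definition emb_tree (y : nat -> V) (Y : set V) (K : R) (s : seq V) : Prop :=
  (forall i, (i < size s)%N -> Y s`_i) /\ equivK K s y.

End BanachDefs.

(** Ordinals below omega^2: the pair (m, n) stands for omega*m + n. *)
Definition ord2 := (nat * nat)%type.
Definition ord2_lt (a b : ord2) : Prop :=
  (a.1 < b.1)%N \/ (a.1 = b.1 /\ (a.2 < b.2)%N).

(** rho_ge T s a  :<->  s \in T and rho_T(s) >= a, where
    rho_T(s) = sup { rho_T(t) + 1 : s strictly below t in T }.
    (rho_T(s) >= a iff for all b < a some strict extension t in T has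
    rho_T(t) >= b.)  For ill-founded trees the nodes on an infinite branch
    satisfy rho_ge for every a, matching rank = infinity. *)
Inductive rho_ge {V : Type} (T : seq V -> Prop) : seq V -> ord2 -> Prop :=
| RhoGe (s : seq V) (a : ord2) :
    T s ->
    (forall b, ord2_lt b a -> exists (x : V) (u : seq V), rho_ge T (s ++ x :: u) b) ->
    rho_ge T s a.

(** rank(T) > a  iff  some s in T has rho_T(s) + 1 > a, i.e. rho_T(s) >= a *)
Definition rank_gt {V : Type} (T : seq V -> Prop) (a : ord2) : Prop :=
  exists s, rho_ge T s a.

Section Minimality.
Variables (R : realType) (V : normedModType R).

Definition Emb_gt (y : nat -> V) (Y : set V) (a : ord2) : Prop :=
  exists K : R, 1 <= K /\ rank_gt (emb_tree y Y K) a.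

(** Emb((y_n), Y) >= omega^2  iff  Emb > a for every ordinal a < omega^2 *)
Definition Emb_ge_omega2 (y : nat -> V) (Y : set V) : Prop :=
  forall a : ord2, Emb_gt y Y a.

Definition omega2_minimal (e : nat -> V) : Prop :=
  forall z : nat -> V, block_basis e z ->
  forall Y : set V, inf_dim_closed_subspace Y -> Emb_ge_omega2 z Y.

End Minimality.

From HB Require Import structures.
From mathcomp Require Import all_boot all_order all_algebra.
From mathcomp Require Import all_classical all_reals all_analysis.
From mathcomp Require Import ring lra zify.
Set Implicit Arguments. Unset Strict Implicit. Unset Printing Implicit Defensive.
Import Order.TTheory GRing.Theory Num.Theory.
Import numFieldNormedType.Exports.
Local Open Scope classical_set_scope.
Local Open Scope ring_scope.

(* The basis projections P_N are uniformly bounded: by Baire's theorem, as in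
   the proof of the open mapping theorem.  Hence every block basis (z_n) is basic
   and the coordinate functionals are continuous, so the tail subspaces
   Y_N = Y ∩ ker e*_0 ∩ ... ∩ ker e*_(N-1) of an infinite-dimensional closed Y
   are again infinite-dimensional and closed.
   Let s be a node of T((z_n), Y, K) of length l.  For N large, P_N almost fixes
   span s and kills Y_N; local minimality puts a Klm-copy of z_l, ..., z_(l+n-1)
   inside Y_N, and appending it to s gives a node of T((z_n), Y, G K) for an
   explicit affine G.  Consequently, with K_m = G^(m+1)(1), the root of
   T((z_n), Y, K_m) has rank greater than omega * m + n for every n. *)

Section Limits.
Variable R : realType.

Lemma cvg_dist_le (V : normedModType R) (u : nat -> V) (l a : V) (b : R) :
  u @ \oo --> l -> (\forall n \near \oo, `|a - u n| <= b) -> `|a - l| <= b.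
Proof.
move=> ul ub.
exact: (closed_cvg _ (closed_closed_ball_ (x := a) (e := b)) ub _ ul).
Qed.

Lemma cvg0_eventually_le (d : nat -> R) eps : d @ \oo --> 0 -> 0 < eps ->
  exists N, forall n, (N <= n)%N -> d n <= eps.
Proof.
move=> d0 e0; have [N _ dN] := (cvgrPdist_le _ _).1 d0 eps e0.
by exists N => n /dN; rewrite sub0r normrN => /(le_trans (ler_norm _)).
Qed.

Lemma cvg_of_dist_le (V : normedModType R) (u : nat -> V) (x : V) (d : nat -> R) :
  d @ \oo --> 0 -> (forall n, `|x - u n| <= d n) -> u @ \oo --> x.
Proof.
move=> d0 ud; apply/cvgrPdist_le => eps e0.
by have [N dN] := cvg0_eventually_le d0 e0; exists N => // n /dN; exact: le_trans.
Qed.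

Lemma cvg_of_cauchy_bound (V : completeNormedModType R) (u : nat -> V) (d : nat -> R) :
  d @ \oo --> 0 -> (forall m n, (m <= n)%N -> `|u n - u m| <= d m) ->
  exists2 l, u @ \oo --> l & forall m, `|u m - l| <= d m.
Proof.
move=> d0 ud.
have : cvg (u @ \oo).
  apply: cauchy_cvg; apply: cauchy_exP => eps e0.
  have [N HN] := cvg0_eventually_le d0 (divr_gt0 e0 (ltr0Sn _ 1)).
  exists (u N); exists N => // n Nn /=.
  rewrite -ball_normE /= -normrN opprB; apply: le_lt_trans (ud _ _ Nn) _.
  by apply: le_lt_trans (HN N (leqnn N)) _; rewrite ltr_pdivrMr // ltr_pMr // ltr1n.
move=> /cvg_ex [l ul]; exists l => // m.
apply: (cvg_dist_le ul); exists m => // n /= mn.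
by rewrite -normrN opprB; exact: ud.
Qed.

Lemma cvg_finite_eventually_le (V : normedModType R) (u : nat -> nat -> V) (x : nat -> V)
    (del : nat -> R) l :
  (forall i, u i @ \oo --> x i) -> (forall i, 0 < del i) ->
  exists N, forall i, (i < l)%N -> forall m, (N <= m)%N -> `|x i - u i m| <= del i.
Proof.
move=> ux del0; elim: l => [|l [N1 N1P]]; first by exists 0%N.
have [N2 _ N2P] := (cvgrPdist_le _ _).1 (ux l) _ (del0 l).
exists (maxn N1 N2) => i; rewrite ltnS leq_eqVlt => /orP [/eqP ->|il] m.
  by rewrite geq_max => /andP [_ N2m]; exact: N2P.
by rewrite geq_max => /andP [N1m _]; exact: N1P.
Qed.

Lemma half_geometric_sum_le m n :
  \sum_(m <= j < n) (2^-1 : R) ^+ j <= 2 * 2^-1 ^+ m.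
Proof.
have h0 : 0 <= (2^-1 : R) ^+ m by rewrite exprn_ge0.
have [nm|mn] := leqP n m; first by rewrite big_geq // mulr_ge0.
rewrite -(subnKC (ltnW mn)) geometric_partial_tail.
apply: le_trans (geometric_le_lim _ _ _ _) _ => //; rewrite ?ger0_norm //.
  by rewrite invf_lt1 // ltr1n.
by rewrite mulrC ler_pM2r // (_ : 1 - 2^-1 = 2^-1) ?invrK //; field.
Qed.

End Limits.

Section LinearOnSpan.
Variables (R : pzRingType) (W : lmodType R) (n : nat) (f : 'I_n -> W) (T : W -> W).
Local Notation span := [set x | exists d : 'I_n -> R, x = \sum_(i < n) d i *: f i].
Hypothesis TD : forall x y, span x -> span y -> T (x + y) = T x + T y.
Hypothesis TZ : forall (c : R) x, span x -> T (c *: x) = c *: T x.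

Lemma span_lincomb (d : 'I_n -> R) : span (\sum_(i < n) d i *: f i).
Proof. by exists d. Qed.

Lemma span_generator i : span (f i).
Proof.
exists (fun j => (j == i)%:R); rewrite (bigD1 i) //= eqxx scale1r big1 ?addr0 // => j /negbTE ->.
by rewrite scale0r.
Qed.

Lemma map_lincomb (d : 'I_n -> R) : T (\sum_(i < n) d i *: f i) = \sum_(i < n) d i *: T (f i).
Proof.
have span0 : span 0 by exists (fun=> 0); rewrite big1 // => i _; rewrite scale0r.
have T0 : T 0 = 0 by have := TZ 0 span0; rewrite !scale0r.
have spanD x y : span x -> span y -> span (x + y).
  move=> [d1 ->] [d2 ->]; exists (fun i => d1 i + d2 i).
  by rewrite -big_split; apply: eq_bigr => i _; rewrite scalerDl.
have spanZ c x : span x -> span (c *: x).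
  move=> [d1 ->]; exists (fun i => c * d1 i).
  by rewrite scaler_sumr; apply: eq_bigr => i _; rewrite scalerA.
suff [] : span (\sum_(i < n) d i *: f i) /\
          T (\sum_(i < n) d i *: f i) = \sum_(i < n) d i *: T (f i) by [].
apply: (big_ind2 (fun x y => span x /\ T x = y)) => [|x1 x2 y1 y2 [sx1 <-] [sx2 <-]|i _].
- by split.
- by split; [exact: spanD | exact: TD].
- by split; [apply: spanZ; exact: span_generator | apply: TZ; exact: span_generator].
Qed.

End LinearOnSpan.

Section SchauderBasis.
Variables (R : realType) (W : completeNormedModType R) (e : nat -> W).
Hypothesis basis_e : schauder_basis e.

Definition partial_sum (a : nat -> R) (N : nat) : W := \sum_(i < N) a i *: e i.

Lemma series_partial_sum a : series (fun i => a i *: e i) = partial_sum a.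
Proof. by apply/funext => n; rewrite /series /= big_mkord. Qed.

Definition basis_coef (x : W) : nat -> R := projT1 (cid (proj1 (basis_e x))).
Local Notation coef := basis_coef.

Lemma basis_coefP x : partial_sum (coef x) @ \oo --> x.
Proof. by rewrite /basis_coef; case: cid => a /=; rewrite series_partial_sum. Qed.

Lemma basis_coef_unique a x : partial_sum a @ \oo --> x -> a = coef x.
Proof.
move=> ax; apply: (proj2 (basis_e x)); rewrite series_partial_sum //.
exact: basis_coefP.
Qed.

Lemma basis_coefD x y : coef (x + y) = fun i => coef x i + coef y i.
Proof.
apply/esym/basis_coef_unique.
have -> : partial_sum (fun i => coef x i + coef y i) =
          fun n => partial_sum (coef x) n + partial_sum (coef y) n.
  apply/funext => n; rewrite /partial_sum -big_split /=.
  by apply: eq_bigr => i _; rewrite scalerDl.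
apply: cvgD; exact: basis_coefP.
Qed.

Lemma basis_coefZ (c : R) x : coef (c *: x) = fun i => c * coef x i.
Proof.
apply/esym/basis_coef_unique.
have -> : partial_sum (fun i => c * coef x i) = fun n => c *: partial_sum (coef x) n.
  apply/funext => n; rewrite /partial_sum scaler_sumr.
  by apply: eq_bigr => i _; rewrite scalerA.
by apply: cvgZ; [exact: cvg_cst | exact: basis_coefP].
Qed.

Lemma partial_sum_stable (b : nat -> R) M N : (M <= N)%N ->
  (forall i, (M <= i)%N -> b i = 0) -> partial_sum b N = partial_sum b M.
Proof.
move=> MN bM; rewrite /partial_sum -(subnKC MN) big_split_ord /=.
by rewrite [X in _ + X]big1 ?addr0 // => i _; rewrite bM ?scale0r // leq_addr.
Qed.

Lemma basis_coef_partial_sum (b : nat -> R) M : (forall i, (M <= i)%N -> b i = 0) ->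
  coef (partial_sum b M) = b.
Proof.
move=> bM; apply/esym/basis_coef_unique; apply: cvg_near_cst; exists M => // n /= Mn.
exact: partial_sum_stable.
Qed.

Lemma basis_neq0 i : e i != 0.
Proof.
apply/eqP => ei0; pose b k : R := (k == i)%:R.
have : partial_sum b (i.+1) = partial_sum (fun=> 0) 0.
  rewrite /partial_sum big_ord0 big1 // => k _.
  by rewrite /b; case: eqP => [->|_]; rewrite ?ei0 ?scaler0 ?scale0r.
move=> /(congr1 coef); rewrite !basis_coef_partial_sum // => [/(congr1 (fun f => f i))|k].
  by rewrite /b eqxx => /eqP; rewrite oner_eq0.
by rewrite /b; case: eqP => // ->; rewrite ltnn.
Qed.

Definition basis_proj (N : nat) (x : W) : W := partial_sum (coef x) N.
Local Notation P := basis_proj.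

Lemma proj_cvg x : P^~ x @ \oo --> x.
Proof. exact: basis_coefP. Qed.

Lemma projD N x y : P N (x + y) = P N x + P N y.
Proof.
rewrite /basis_proj /partial_sum basis_coefD -big_split.
by apply: eq_bigr => i _; rewrite scalerDl.
Qed.

Lemma projZ N c x : P N (c *: x) = c *: P N x.
Proof.
rewrite /basis_proj /partial_sum basis_coefZ scaler_sumr.
by apply: eq_bigr => i _; rewrite scalerA.
Qed.

Lemma proj0 N : P N 0 = 0.
Proof. by rewrite -[0 in LHS](scale0r 0) projZ scale0r. Qed.

Lemma projB N x y : P N (x - y) = P N x - P N y.
Proof. by rewrite projD -scaleN1r projZ scaleN1r. Qed.

Lemma proj_sum N I (r : seq I) (Q : pred I) (F : I -> W) :
  P N (\sum_(i <- r | Q i) F i) = \sum_(i <- r | Q i) P N (F i).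
Proof. exact: (big_morph (P N) (projD N) (proj0 N)). Qed.

Lemma proj_nil x : P 0 x = 0.
Proof. by rewrite /basis_proj /partial_sum big_ord0. Qed.

Lemma projS N x : P N.+1 x = P N x + coef x N *: e N.
Proof. by rewrite /basis_proj /partial_sum big_ord_recr. Qed.

Lemma basis_coef_scale x i : coef x i *: e i = P i.+1 x - P i x.
Proof. by rewrite projS addrAC subrr add0r. Qed.

End SchauderBasis.

Section BaireApproximation.
Variables (R : realType) (W : completeNormedModType R) (e : nat -> W).
Hypothesis basis_e : schauder_basis e.
Local Notation P := (basis_proj basis_e).

Lemma proj_bounded x : exists k : nat, forall N, `|P N x| <= k%:R.
Proof.
have [M [_ xM]] := cvg_seq_bounded (cvgP _ (proj_cvg basis_e (x := x))).
exists (Num.truncn `|M|).+1 => N; apply: (xM _ _ N Logic.I).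
exact: le_lt_trans (ler_norm M) (truncnS_gt _).
Qed.

Lemma ball_sub_closure_proj_bounded : exists (k : nat) (x0 : W) (r : R),
  0 < r /\ ball x0 r `<=` closure [set x | forall N, `|P N x| <= k%:R].
Proof.
pose E k := [set x : W | forall N, `|P N x| <= k%:R].
have : ~ forall k, open (~` closure (E k)) /\ dense (~` closure (E k)).
  move=> /Baire /(_ setT) [||x [_ xE]]; [by exists 0 | exact: openT |].
  have [k xk] := proj_bounded x.
  by apply: (xE k Logic.I); exact: subset_closure.
move=> /existsNP [k /not_andP [|]].
  by move=> []; apply: closed_openC; exact: closed_closure.
move=> /denseNE [U [[x /open_nbhs_nbhs /nbhs_ballP [r r0 xrU]] UE]].
exists k, x, r; split => //.
suff : ball x r `&` ~` closure (E k) = set0 by move/disjoints_subset; rewrite setCK.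
by apply/seteqP; split => // y [/xrU Uy Ey]; rewrite -UE; split.
Qed.

(* With B(x0, r) in the closure of E_k = {y | |P_N y| <= k for all N}, x is
   approximately (y1 - y2) / t with y1 near x0 + t x and y2 near x0, both in E_k. *)
Lemma proj_bounded_approx : exists2 M : R, 0 < M & forall x (eps : R), 0 < eps ->
  exists y, (forall N, `|P N y| <= M * `|x|) /\ `|x - y| <= eps.
Proof.
have [k [x0 [r [r0 closE]]]] := ball_sub_closure_proj_bounded.
have near_E y eps : ball x0 r y -> 0 < eps ->
    exists z, (forall N, `|P N z| <= k%:R) /\ `|y - z| < eps.
  move=> /closE yE e0; have [z [Ez yz]] := yE _ (nbhsx_ballx y eps e0).
  by exists z; split => //; move: yz; rewrite -ball_normE.
exists (4 * k.+1%:R / r); first by rewrite divr_gt0 // mulr_gt0.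
move=> x eps e0; have [->|x0n] := eqVneq x 0.
  exists 0; split => [N|]; first by rewrite proj0 !normr0 mulr0.
  by rewrite subr0 normr0 ltW.
have nx : 0 < `|x| by rewrite normr_gt0.
pose t := r / (2 * `|x|).
have t0 : 0 < t by rewrite divr_gt0 // mulr_gt0.
have xt : ball x0 r (x0 + t *: x).
  rewrite -ball_normE /= opprD addrA subrr sub0r normrN normrZ gtr0_norm //.
  have -> : t * `|x| = r / 2 by rewrite /t; field; rewrite gt_eqF.
  lra.
have te0 : 0 < t * eps / 2 by rewrite divr_gt0 // mulr_gt0.
have [y1 [E1 h1]] := near_E _ _ xt te0.
have [y2 [E2 h2]] := near_E _ _ (ballxx x0 r0) te0.
exists (t^-1 *: (y1 - y2)); split => [N|].
  rewrite projZ projB normrZ gtr0_norm ?invr_gt0 //.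
  have : `|P N y1 - P N y2| <= k%:R + k%:R by apply: (le_trans (ler_normB _ _)); rewrite lerD.
  have -> : 4 * k.+1%:R / r * `|x| = 2 * k.+1%:R * t^-1 by rewrite /t; field; rewrite !gt_eqF.
  rewrite mulrC ler_pM2r ?invr_gt0 // -natr1; have := ler0n R k; lra.
have -> : x - t^-1 *: (y1 - y2) = t^-1 *: ((x0 + t *: x - y1) - (x0 - y2)).
  rewrite [x0 + _]addrC addrAC addrKA opprK -addrA -[y2 - y1]opprB.
  by rewrite [RHS]scalerBr scalerA mulVf ?gt_eqF // scale1r.
rewrite normrZ gtr0_norm ?invr_gt0 // -ler_pdivlMl ?invr_gt0 // invrK.
apply: (le_trans (ler_normB _ _)); have := ltW h1; have := ltW h2; lra.
Qed.

End BaireApproximation.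

Section ProjectionConvergence.
Variables (R : realType) (W : completeNormedModType R) (e : nat -> W).
Hypothesis basis_e : schauder_basis e.
Local Notation P := (basis_proj basis_e).
Local Notation coef := (basis_coef basis_e).

Lemma basis_coef_dist_le x y i :
  `|coef x i - coef y i| * `|e i| <= `|P i.+1 x - P i.+1 y| + `|P i x - P i y|.
Proof.
rewrite -normrZ scalerBl !basis_coef_scale.
have -> : P i.+1 x - P i x - (P i.+1 y - P i y) = (P i.+1 x - P i.+1 y) - (P i x - P i y).
  by rewrite !opprD !opprK addrACA.
exact: ler_normB.
Qed.

(* The projections are not yet known to be continuous; uniform control of
   P N (u n) in N transfers the convergence u n --> x to each P N (u n). *)
Lemma proj_cvg_uniform (u : nat -> W) (x : W) (d : nat -> R) :
  u @ \oo --> x -> d @ \oo --> 0 ->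
  (forall m n N, (m <= n)%N -> `|P N (u n) - P N (u m)| <= d m) ->
  forall N, (fun n => P N (u n)) @ \oo --> P N x.
Proof.
move=> ux d0 ud.
have limP N : exists q,
    (fun n => P N (u n)) @ \oo --> q /\ forall m, `|P N (u m) - q| <= d m.
  have [q uq uqd] := cvg_of_cauchy_bound d0 (fun m n mn => ud m n N mn).
  by exists q.
have [q qP] := choice limP.
have coef_lim i : exists a : R, (fun n => coef (u n) i) @ \oo --> a.
  have ei : 0 < `|e i| by rewrite normr_gt0 basis_neq0.
  suff [l ul _] : exists2 l, (fun n => coef (u n) i) @ \oo --> l &
      forall m, `|coef (u m) i - l| <= 2 * d m / `|e i| by exists l.
  apply: cvg_of_cauchy_bound => [|m n mn].
    rewrite -(mul0r (`|e i|^-1)) -(mulr0 2).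
    by apply: cvgM; [apply: cvgM => //; exact: cvg_cst | exact: cvg_cst].
  rewrite ler_pdivlMr //; apply: le_trans (basis_coef_dist_le _ _ _) _.
  by rewrite mulr2n mulrDl mul1r lerD ?ud.
have [a aP] := choice coef_lim.
have qS i : q i.+1 = q i + a i *: e i.
  apply: (norm_cvg_unique (qP i.+1).1).
  have -> : (fun n => P i.+1 (u n)) = fun n => P i (u n) + coef (u n) i *: e i.
    by apply/funext => n; rewrite projS.
  apply: cvgD; first exact: (qP i).1.
  by apply: cvgZ; [exact: aP | exact: cvg_cst].
have q_sum N : q N = partial_sum e a N.
  elim: N => [|N IH]; last by rewrite qS IH /partial_sum big_ord_recr.
  rewrite /partial_sum big_ord0; apply: (norm_cvg_unique (qP 0).1).
  have -> : (fun n => P 0 (u n)) = fun=> 0 by apply/funext => n; rewrite proj_nil.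
  exact: cvg_cst.
have xa : partial_sum e a @ \oo --> x.
  apply/cvgrPdist_le => eps e0; have e3 : 0 < eps / 3 by rewrite divr_gt0.
  have [J1 _ uJ] := (cvgrPdist_le _ _).1 ux _ e3.
  have [J2 dJ] := cvg0_eventually_le d0 e3.
  pose J := maxn J1 J2.
  have dJ' := dJ J (leq_maxr _ _).
  apply: filterS ((cvgrPdist_le _ _).1 (proj_cvg basis_e (x := u J)) _ e3) => N uPN.
  rewrite -q_sum.
  have -> : x - q N = (x - u J) + (u J - P N (u J)) + (P N (u J) - q N).
    by rewrite !addrA !subrK.
  have := uJ J (leq_maxl _ _); have := (qP N).2 J.
  move: (ler_normD (x - u J + (u J - P N (u J))) (P N (u J) - q N)).
  move: (ler_normD (x - u J) (u J - P N (u J))); lra.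
move=> N; have -> : P N x = q N by rewrite q_sum (basis_coef_unique basis_e xa).
exact: (qP N).1.
Qed.

End ProjectionConvergence.

Section UniformProjectionBound.
Variables (R : realType) (W : completeNormedModType R) (e : nat -> W).
Hypothesis basis_e : schauder_basis e.
Local Notation P := (basis_proj basis_e).

Section Iteration.
Variable M : R.
Hypothesis M_ge0 : 0 <= M.
Hypothesis approx : forall x (eps : R), 0 < eps ->
  exists y, (forall N, `|P N y| <= M * `|x|) /\ `|x - y| <= eps.

(* Open-mapping iteration: x is the sum of approximants v j of the successive
   residuals r j, with |r j| <= |x| / 2^j. *)
Lemma proj_norm_le_of_approx N x : `|P N x| <= 2 * M * `|x|.
Proof.
have [->|x0] := eqVneq x 0; first by rewrite proj0 !normr0 mulr0.
have /choice [y yP] : forall p : W * R, exists y, 0 < p.2 ->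
    (forall N, `|P N y| <= M * `|p.1|) /\ `|p.1 - y| <= p.2.
  move=> [z eps] /=; have [e0|] := ltrP 0 eps; last by exists 0.
  by have [y ?] := approx z e0; exists y.
pose h : R := 2^-1.
have h0 : 0 < h by rewrite invr_gt0.
pose eps j := `|x| * h ^+ j.+1.
have eps0 j : 0 < eps j by rewrite mulr_gt0 ?normr_gt0 // exprn_gt0.
pose fix r j := if j is j'.+1 then r j' - y (r j', eps j') else x.
pose v j := y (r j, eps j).
have r_le j : `|r j| <= `|x| * h ^+ j.
  case: j => [|j]; first by rewrite expr0 mulr1.
  exact: (yP (r j, eps j) (eps0 j)).2.
have Pv_le j N' : `|P N' (v j)| <= M * `|x| * h ^+ j.
  apply: le_trans ((yP (r j, eps j) (eps0 j)).1 N') _.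
  by rewrite -mulrA; apply: ler_wpM2l (r_le j).
pose u n := \sum_(0 <= j < n) v j.
have u_eq n : u n = x - r n.
  elim: n => [|n IH]; first by rewrite /u big_geq // subrr.
  by rewrite /u big_nat_recr //= -/(u n) IH opprB addrA addrAC.
have u_incr m n N' : (m <= n)%N -> `|P N' (u n) - P N' (u m)| <= 2 * M * `|x| * h ^+ m.
  move=> mn; rewrite -projB /u (big_cat_nat (leq0n m) mn) /= addrAC subrr add0r proj_sum.
  apply: le_trans (ler_norm_sum _ _ _) _.
  apply: le_trans (ler_sum _ (fun j _ => Pv_le j N')) _.
  have -> : 2 * M * `|x| * h ^+ m = M * `|x| * (2 * h ^+ m) by ring.
  rewrite -big_distrr; apply: ler_wpM2l; first by rewrite mulr_ge0.
  exact: half_geometric_sum_le.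
have geom0 c : (fun m => c * h ^+ m) @ \oo --> 0.
  by apply: (cvg_geometric c); rewrite gtr0_norm // invf_lt1 // ltr1n.
have ux : u @ \oo --> x.
  apply: cvg_of_dist_le (geom0 `|x|) _ => n.
  by rewrite u_eq opprB addrC subrK.
have PuPx := proj_cvg_uniform ux (geom0 (2 * M * `|x|)) u_incr (N := N).
rewrite -normrN -sub0r; apply: (cvg_dist_le PuPx).
exists 0%N => // n _; rewrite sub0r normrN.
have u0 : u 0%N = 0 by rewrite /u big_geq.
by have := u_incr 0%N n N (leq0n n); rewrite u0 proj0 subr0 expr0 mulr1.
Qed.

End Iteration.

Lemma proj_uniform_bound : exists2 C : R, 1 <= C & forall N x, `|P N x| <= C * `|x|.
Proof.
have [M M0 approx] := proj_bounded_approx basis_e.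
exists (2 * M + 1) => [|N x]; first by rewrite lerDr mulr_ge0 // ltW.
apply: le_trans (proj_norm_le_of_approx (ltW M0) approx N x) _.
by rewrite ler_wpM2r // lerDl.
Qed.

End UniformProjectionBound.

Section BlockProjections.
Variables (R : realType) (W : completeNormedModType R) (e : nat -> W).
Hypothesis basis_e : schauder_basis e.
Local Notation P := (basis_proj basis_e).
Local Notation coef := (basis_coef basis_e).

Lemma block_partial_sum (a : nat -> R) lo hi :
  \sum_(lo <= i < hi) a i *: e i =
  partial_sum e (fun i => if (lo <= i < hi)%N then a i else 0) hi.
Proof.
rewrite big_geq_mkord /partial_sum big_mkcond /=; apply: eq_bigr => i _.
by rewrite ltn_ord andbT; case: ifP; rewrite ?scale0r.
Qed.

Lemma basis_coef_block (a : nat -> R) lo hi :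
  coef (\sum_(lo <= i < hi) a i *: e i) = fun i => if (lo <= i < hi)%N then a i else 0.
Proof.
by rewrite block_partial_sum basis_coef_partial_sum // => i; rewrite ltnNge => ->; rewrite andbF.
Qed.

Lemma proj_block_in N (a : nat -> R) lo hi : (hi <= N)%N ->
  P N (\sum_(lo <= i < hi) a i *: e i) = \sum_(lo <= i < hi) a i *: e i.
Proof.
move=> hiN; rewrite /basis_proj basis_coef_block (partial_sum_stable e hiN).
  by rewrite -block_partial_sum.
by move=> i; rewrite ltnNge => ->; rewrite andbF.
Qed.

Lemma proj_block_out N (a : nat -> R) lo hi : (N <= lo)%N ->
  P N (\sum_(lo <= i < hi) a i *: e i) = 0.
Proof.
move=> Nlo; rewrite /basis_proj basis_coef_block /partial_sum big1 // => i _.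
by rewrite leqNgt (leq_trans (ltn_ord i) Nlo) scale0r.
Qed.

End BlockProjections.

Section BasisConstant.
Variables (R : realType) (W : completeNormedModType R) (e : nat -> W).
Hypothesis basis_e : schauder_basis e.
Local Notation P := (basis_proj basis_e).
Local Notation coef := (basis_coef basis_e).
Variable C : R.
Hypothesis proj_le : forall N x, `|P N x| <= C * `|x|.

Lemma basis_coef_norm_le x i : `|coef x i| * `|e i| <= 2 * C * `|x|.
Proof.
rewrite -normrZ basis_coef_scale; apply: le_trans (ler_normB _ _) _.
by rewrite mulr2n !mulrDl mul1r lerD.
Qed.

Variables (z : nat -> W) (p : nat -> nat) (a : nat -> R).
Hypothesis p_incr : forall n, (p n < p n.+1)%N.
Hypothesis z_block : forall n, z n = \sum_(p n <= i < p n.+1) a i *: e i.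

Definition block_comb (c : nat -> R) (L : nat) : W := \sum_(k < L) c k *: z k.

Lemma proj_block_comb c j L : (j <= L)%N -> P (p j) (block_comb c L) = block_comb c j.
Proof.
have p_mono : {homo p : m n / (m <= n)%N}.
  by apply: homo_leq => [//|m n k|n]; [exact: leq_trans | exact: ltnW].
move=> jL; rewrite /block_comb proj_sum -(subnKC jL) big_split_ord /=.
rewrite [X in _ + X]big1 ?addr0 => [|k _].
  by apply: eq_bigr => k _; rewrite projZ z_block proj_block_in // p_mono.
by rewrite projZ z_block proj_block_out ?scaler0 // p_mono // leq_addr.
Qed.

Lemma block_comb_le c j L : (j <= L)%N -> `|block_comb c j| <= C * `|block_comb c L|.
Proof. by move=> jL; rewrite -(proj_block_comb c jL). Qed.

Lemma block_coef_le c i L : (i < L)%N -> `|c i| * `|z i| <= 2 * C * `|block_comb c L|.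
Proof.
move=> iL; rewrite -normrZ.
have -> : c i *: z i = block_comb c i.+1 - block_comb c i.
  by rewrite /block_comb big_ord_recr /= addrAC subrr add0r.
apply: le_trans (ler_normB _ _) _.
by rewrite mulr2n !mulrDl mul1r lerD // block_comb_le // ltnW.
Qed.

End BasisConstant.

Section KernelOfFunctional.
Variables (R : realType) (W : normedModType R) (phi : W -> R).
Hypothesis phiD : forall x y, phi (x + y) = phi x + phi y.
Hypothesis phiZ : forall c x, phi (c *: x) = c * phi x.
Local Notation ker := [set x | phi x = 0].

Lemma phiN x : phi (- x) = - phi x.
Proof. by rewrite -scaleN1r phiZ mulN1r. Qed.

Lemma lin_subspace_ker Y : lin_subspace Y -> lin_subspace (Y `&` ker).
Proof.
move=> [Y0 [YD YZ]]; split; last split.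
- by split => //=; rewrite -(scale0r 0) phiZ mul0r.
- by move=> x y [Yx /= px] [Yy /= py]; split; [exact: YD | rewrite /= phiD px py addr0].
- by move=> c x [Yx /= px]; split; [exact: YZ | rewrite /= phiZ px mulr0].
Qed.

Lemma closed_ker (L : R) : (forall x, `|phi x| <= L * `|x|) ->
  forall Y, closed Y -> closed (Y `&` ker).
Proof.
move=> phiL Y clY; apply: closedI => //.
have cont : continuous phi.
  move=> x; apply/cvgrPdist_le => eps e0; apply/nbhs_ballP.
  have L1 : 0 < `|L| + 1 by rewrite ltr_wpDl.
  exists (eps / (`|L| + 1)) => [|y]; first by rewrite /= divr_gt0.
  rewrite -ball_normE /= => xy; rewrite -phiN -phiD.
  apply: le_trans (phiL _) _; rewrite ltr_pdivlMr // in xy.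
  have := normr_ge0 (x - y); have := ler_norm L; nra.
exact: (preimage_closed (fun x _ => cont x) (@closed_eq R 0)).
Qed.

(* A codimension-one section of an infinite-dimensional space: from n + 1
   independent vectors, subtract multiples of a pivot outside the kernel. *)
Lemma infinite_dim_ker Y : lin_subspace Y -> infinite_dim Y -> infinite_dim (Y `&` ker).
Proof.
move=> [_ [YD YZ]] Yinf n; have [f [Yf f_free]] := Yinf n.+1.
have [k0 k0P] : exists k0 : 'I_n.+1, phi (f k0) = 0 -> forall k, phi (f k) = 0.
  have [[k fk]|none] := pselect (exists k, phi (f k) <> 0); first by exists k.
  by exists ord0 => _ k; apply: contrapT => fk; apply: none; exists k.
pose t i := phi (f (lift k0 i)) / phi (f k0).
pose g i := f (lift k0 i) - t i *: f k0.
exists g; split => [i|c gc i].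
  split; first by apply: YD; rewrite ?Yf // -scaleN1r; apply: (YZ); apply: (YZ).
  rewrite /= phiD phiN phiZ /t; have [f0|f0] := eqVneq (phi (f k0)) 0.
    by rewrite f0 mulr0 oppr0 addr0 (k0P f0).
  by rewrite divfK // subrr.
pose c' k := if unlift k0 k is Some i then c i else - \sum_(i < n) c i * t i.
suff /f_free /(_ (lift k0 i)) : \sum_(k < n.+1) c' k *: f k = 0 by rewrite /c' liftK.
rewrite (bigD1_ord k0) //= /c' unlift_none; under eq_bigr do rewrite liftK.
have : \sum_(i < n) c i *: g i =
    \sum_(i < n) c i *: f (lift k0 i) - (\sum_(i < n) c i * t i) *: f k0.
  by rewrite scaler_suml -sumrB; apply: eq_bigr => j _; rewrite /g scalerBr scalerA.
by rewrite gc => /eqP; rewrite eq_sym subr_eq0 => /eqP ->; rewrite scaleNr addNr.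
Qed.

End KernelOfFunctional.

Section TailSubspace.
Variables (R : realType) (W : completeNormedModType R) (e : nat -> W).
Hypothesis basis_e : schauder_basis e.
Local Notation P := (basis_proj basis_e).
Local Notation coef := (basis_coef basis_e).
Variable C : R.
Hypothesis proj_le : forall N x, `|P N x| <= C * `|x|.

Definition tail_subspace (Y : set W) (N : nat) :=
  Y `&` [set x | forall i, (i < N)%N -> coef x i = 0].

Lemma proj_tail Y N y : tail_subspace Y N y -> P N y = 0.
Proof. by move=> [_ y0]; rewrite /basis_proj /partial_sum big1 // => i _; rewrite y0 ?scale0r. Qed.

Lemma tail_subspaceS Y N :
  tail_subspace Y N.+1 = tail_subspace Y N `&` [set x | coef x N = 0].
Proof.
apply/seteqP; split => [y [Yy y0]|y [[Yy y0] yN]].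
  by split; [split => // i iN; apply: y0; exact: ltnW | exact: y0].
by split => // i; rewrite ltnS leq_eqVlt => /orP [/eqP ->|/y0].
Qed.

Lemma tail_inf_dim_closed Y N :
  inf_dim_closed_subspace Y -> inf_dim_closed_subspace (tail_subspace Y N).
Proof.
move=> Yidc; elim: N => [|N [tail_lin [tail_closed tail_inf]]].
  by rewrite /tail_subspace (_ : [set x | _] = setT) ?setIT //; apply/seteqP.
have coefND x y : coef (x + y) N = coef x N + coef y N by rewrite basis_coefD.
have coefNZ c x : coef (c *: x) N = c * coef x N by rewrite basis_coefZ.
have eN : 0 < `|e N| by rewrite normr_gt0 basis_neq0.
rewrite tail_subspaceS; split; last split.
- exact: lin_subspace_ker.
- apply: (closed_ker coefND coefNZ (L := 2 * C / `|e N|)) => // x.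
  by rewrite mulrAC ler_pdivlMr // basis_coef_norm_le.
- exact: infinite_dim_ker.
Qed.

End TailSubspace.

Section EmbeddingTree.
Variables (R : realType) (V : normedModType R) (y : nat -> V) (Y : set V).

Lemma emb_tree_nil K : emb_tree y Y K [::].
Proof. by split => [//|c]; rewrite !big_ord0 !normr0 !mulr0. Qed.

Lemma emb_tree_prefix K s t : emb_tree y Y K (s ++ t) -> emb_tree y Y K s.
Proof.
move=> [st_in st_eq]; split.
  move=> i si; have := st_in i; rewrite size_cat nth_cat si; apply.
  exact: leq_trans si (leq_addr _ _).
move=> c; pose c' i := if (i < size s)%N then c i else 0.
have sum_c' (f : nat -> V) :
    \sum_(i < size (s ++ t)) c' i *: f i = \sum_(i < size s) c i *: f i.
  rewrite size_cat big_split_ord /= [X in _ + X]big1 ?addr0 => [|i _].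
    by apply: eq_bigr => i _; rewrite /c' ltn_ord.
  by rewrite /c' ltnNge leq_addr scale0r.
have := st_eq c'; rewrite !sum_c'.
by under eq_bigr do rewrite nth_cat ltn_ord.
Qed.

Lemma emb_tree_mono K1 K2 s : 1 <= K1 -> K1 <= K2 ->
  emb_tree y Y K1 s -> emb_tree y Y K2 s.
Proof.
move=> K1ge1 K12 [s_in s_eq]; split => // c; have [lo up] := s_eq c.
have K1pos : 0 < K1 by apply: lt_le_trans K1ge1.
have K2pos : 0 < K2 by apply: lt_le_trans K12.
split; first by apply: le_trans lo; rewrite ler_wpM2r // lef_pV2 ?posrE.
by apply: le_trans up _; rewrite ler_wpM2r.
Qed.

End EmbeddingTree.

Section Extension.
Variables (R : realType) (W : completeNormedModType R) (e : nat -> W).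
Hypothesis basis_e : schauder_basis e.
Local Notation P := (basis_proj basis_e).
Variable C : R.
Hypothesis C_ge1 : 1 <= C.
Hypothesis proj_le : forall N x, `|P N x| <= C * `|x|.
Variables (z : nat -> W) (p : nat -> nat) (a : nat -> R).
Hypothesis p_incr : forall n, (p n < p n.+1)%N.
Hypothesis z_block : forall n, z n = \sum_(p n <= i < p n.+1) a i *: e i.
Hypothesis z_neq0 : forall n, z n != 0.
Variable Y : set W.
Hypothesis Y_idc : inf_dim_closed_subspace Y.
Variable Klm : R.
Hypothesis Klm_ge1 : 1 <= Klm.
Hypothesis loc_min : forall F Y' : set W,
  finite_dim_subspace F -> inf_dim_closed_subspace Y' -> K_embeds Klm F Y'.

Definition seq_comb (s : seq W) (c : nat -> R) : W := \sum_(i < size s) c i *: s`_i.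

Lemma norm_le_of_proj_close N X Yw :
  `|X - P N X| <= `|X| / 2 -> P N Yw = 0 -> `|X| <= 2 * C * `|X + Yw|.
Proof.
move=> XP Yw0; have PX : `|P N X| <= C * `|X + Yw| by rewrite -[P N X]addr0 -Yw0 -projD.
have := ler_normD (P N X) (X - P N X); rewrite addrC subrK; lra.
Qed.

Lemma seq_comb_proj_close s K N c : 0 < K ->
  `|block_comb z c (size s)| <= K * `|seq_comb s c| ->
  (forall i, (i < size s)%N -> `|s`_i - P N s`_i| <= `|z i| / (4 * C * K * (size s).+1%:R)) ->
  `|seq_comb s c - P N (seq_comb s c)| <= `|seq_comb s c| / 2.
Proof.
move=> K0 zK sN; set l := size s; set X := seq_comb s c.
have C0 : 0 < C by apply: lt_le_trans C_ge1.
have l1 : 0 < l.+1%:R :> R by [].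
have -> : X - P N X = \sum_(i < l) c i *: (s`_i - P N s`_i).
  rewrite /X /seq_comb proj_sum -sumrB.
  by apply: eq_bigr => i _; rewrite projZ scalerBr.
apply: le_trans (ler_norm_sum _ _ _) _.
apply: le_trans (_ : \sum_(i < l) `|X| / (2 * l.+1%:R) <= _).
  apply: ler_sum => i _; rewrite normrZ.
  apply: le_trans (ler_wpM2l (normr_ge0 _) (sN i (ltn_ord i))) _.
  rewrite mulrA ler_pdivrMr ?mulr_gt0 //.
  apply: le_trans (block_coef_le proj_le p_incr z_block c (ltn_ord i)) _.
  have -> : `|X| / (2 * l.+1%:R) * (4 * C * K * l.+1%:R) = 2 * C * (K * `|X|).
    by field; rewrite addrC natr1 pnatr_eq0.
  by rewrite ler_wpM2l ?mulr_ge0 // ltW.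
rewrite sumr_const card_ord.
have -> : `|X| / (2 * l.+1%:R) *+ l = `|X| / 2 * (l%:R / l.+1%:R).
  by rewrite -mulr_natr; field; rewrite addrC natr1 pnatr_eq0.
by rewrite ler_piMr ?divr_ge0 // ler_pdivrMr // mul1r ler_nat.
Qed.

(* Local minimality, applied inside the tail subspace, yields a copy of the
   blocks z_l, ..., z_(l+n-1); rescaling by ||T|| makes the copy map non-expansive. *)
Lemma tail_copy l n N : exists w : seq W,
  [/\ size w = n, forall i, (i < n)%N -> tail_subspace basis_e Y N w`_i &
      forall c : nat -> R, `|\sum_(i < n) c i *: w`_i| <= `|\sum_(i < n) c i *: z (l + i)%N| /\
        `|\sum_(i < n) c i *: z (l + i)%N| <= Klm * `|\sum_(i < n) c i *: w`_i|].
Proof.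
pose f (i : 'I_n) := z (l + i)%N.
have F_fin : finite_dim_subspace [set x | exists d : 'I_n -> R, x = \sum_(i < n) d i *: f i].
  by exists n, f.
have tail_idc := tail_inf_dim_closed proj_le N Y_idc.
have [T [t [b [TD [TZ [TY [t0 [b0 [tb [Tt Tb]]]]]]]]]] := loc_min F_fin tail_idc.
have [[_ [_ tailZ]] _] := tail_idc.
exists (mkseq (fun i => t^-1 *: T (z (l + i)%N)) n); split.
- exact: size_mkseq.
- move=> i ilt; rewrite nth_mkseq //; apply: (tailZ); apply: TY.
  exact: (span_generator f (Ordinal ilt)).
move=> c; have -> : \sum_(i < n) c i *: (mkseq (fun i => t^-1 *: T (z (l + i)%N)) n)`_i =
    t^-1 *: T (\sum_(i < n) c i *: f i).
  rewrite (map_lincomb TD TZ) scaler_sumr; apply: eq_bigr => i _.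
  by rewrite nth_mkseq // !scalerA mulrC.
have Z_span := span_lincomb f (fun i => c i).
rewrite normrZ gtr0_norm ?invr_gt0 //; split.
  by rewrite ler_pdivrMl //; exact: Tt.
apply: le_trans (Tb _ Z_span) _; rewrite mulrA.
by apply: ler_wpM2r => //; rewrite ler_pdivlMr // mulrC.
Qed.

Definition ext_const (K : R) := K * (3 * C) + (1 + C) + Klm * (1 + 2 * C).

Lemma ext_const_ge K : 1 <= K -> K <= ext_const K.
Proof.
move=> K1; have := C_ge1; have := Klm_ge1; rewrite /ext_const => Klm1 C1.
have : K <= K * (3 * C) by apply: ler_peMr; lra.
have : 0 <= Klm * (1 + 2 * C) by rewrite mulr_ge0 //; lra.
lra.
Qed.

Lemma ext_const_mono K1 K2 : K1 <= K2 -> ext_const K1 <= ext_const K2.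
Proof.
move=> K12; have := C_ge1; rewrite /ext_const => C1.
have : K1 * (3 * C) <= K2 * (3 * C) by rewrite ler_wpM2r //; lra.
lra.
Qed.

(* The origin of ext_const: the old part X of the glued sequence is compared
   through K, the new part Yw through Klm, and the two are decoupled by the
   almost orthogonality |X| <= 2C |X + Yw|. *)
Lemma ext_const_equiv K (X Yw Z1 Z2 : W) : 1 <= K ->
  `|X| <= K * `|Z1| -> `|Z1| <= K * `|X| -> `|Z1| <= C * `|Z1 + Z2| ->
  `|Yw| <= `|Z2| -> `|Z2| <= Klm * `|Yw| -> `|X| <= 2 * C * `|X + Yw| ->
  (ext_const K)^-1 * `|X + Yw| <= `|Z1 + Z2| /\ `|Z1 + Z2| <= ext_const K * `|X + Yw|.
Proof.
move=> K1 XZ1 Z1X Z1Z YwZ2 Z2Yw XS; have K0 : 0 < K by apply: lt_le_trans K1.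
have C1 := C_ge1; have Klm1 := Klm_ge1.
have Z2Z : `|Z2| <= (1 + C) * `|Z1 + Z2|.
  have := ler_normB (Z1 + Z2) Z1; rewrite addrAC subrr add0r mulrDl mul1r.
  by move: Z1Z; lra.
have G0 : 0 < ext_const K by apply: lt_le_trans K0 (ext_const_ge K1).
split.
  rewrite ler_pdivrMl // /ext_const; set z0 := `|Z1 + Z2| in Z1Z Z2Z *.
  have z00 : 0 <= z0 := normr_ge0 _.
  have := ler_normD X Yw; have := ler_wpM2l (ltW K0) Z1Z.
  have : 0 <= K * (C * z0) by rewrite !mulr_ge0 //; lra.
  have : 0 <= Klm * z0 by rewrite mulr_ge0 //; lra.
  have : 0 <= Klm * (C * z0) by rewrite !mulr_ge0 //; lra.
  rewrite mulrDl mul1r in Z2Z.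
  have -> : (K * (3 * C) + (1 + C) + Klm * (1 + 2 * C)) * z0 =
    3 * (K * (C * z0)) + z0 + C * z0 + Klm * z0 + 2 * (Klm * (C * z0)) by ring.
  lra.
rewrite /ext_const; set s0 := `|X + Yw| in XS *; have s00 : 0 <= s0 := normr_ge0 _.
have := ler_normB (X + Yw) X; rewrite addrAC subrr add0r -/s0 => YwS.
have := ler_normD Z1 Z2; have := ler_wpM2l (ltW K0) XS.
have := ler_wpM2l (le_trans ler01 Klm1) YwS; have := ler_wpM2l (le_trans ler01 Klm1) XS.
have : 0 <= K * (C * s0) by rewrite !mulr_ge0 //; lra.
have : 0 <= Klm * s0 by rewrite mulr_ge0 //; lra.
have : 0 <= Klm * (C * s0) by rewrite !mulr_ge0 //; lra.
have -> : (K * (3 * C) + (1 + C) + Klm * (1 + 2 * C)) * s0 =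
  3 * (K * (C * s0)) + s0 + C * s0 + Klm * s0 + 2 * (Klm * (C * s0)) by ring.
have -> : K * (2 * C * s0) = 2 * (K * (C * s0)) by ring.
have -> : Klm * (2 * C * s0) = 2 * (Klm * (C * s0)) by ring.
have : 0 <= C * s0 by rewrite mulr_ge0 //; lra.
rewrite mulrDr; lra.
Qed.

Lemma emb_tree_extend K s : 1 <= K -> emb_tree z Y K s ->
  forall n, exists w, size w = n /\ emb_tree z Y (ext_const K) (s ++ w).
Proof.
move=> K1 [s_in s_eq] n; set l := size s.
have K0 : 0 < K by apply: lt_le_trans K1.
have C0 : 0 < C by apply: lt_le_trans C_ge1.
pose del i := `|z i| / (4 * C * K * l.+1%:R).
have del0 i : 0 < del i by rewrite divr_gt0 ?normr_gt0 // !mulr_gt0.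
have [N NP] := cvg_finite_eventually_le l (fun i => proj_cvg basis_e (x := s`_i)) del0.
have [w [w_size w_tail w_eq]] := tail_copy l n N.
exists w; split => //; split.
  move=> i; rewrite size_cat w_size nth_cat => ilt; case: ifP => il; first exact: s_in.
  by apply: (w_tail _ _).1; rewrite ltn_subLR // leqNgt il.
move=> c; set X := seq_comb s c; set Yw := \sum_(i < n) c (l + i)%N *: w`_i.
set Z1 := block_comb z c l; set Z2 := \sum_(i < n) c (l + i)%N *: z (l + i)%N.
have -> : \sum_(i < size (s ++ w)) c i *: (s ++ w)`_i = X + Yw.
  rewrite size_cat w_size big_split_ord /=; congr (_ + _).
    by apply: eq_bigr => i _; rewrite nth_cat ltn_ord.
  by apply: eq_bigr => i _; rewrite nth_cat ltnNge leq_addr /= addKn.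
have Z_eq : \sum_(i < size (s ++ w)) c i *: z i = Z1 + Z2.
  by rewrite size_cat w_size big_split_ord.
rewrite Z_eq.
have [XZ1 Z1X] := s_eq c.
rewrite -/l -/(block_comb z c l) -/Z1 -/(seq_comb s c) -/X ler_pdivrMl // in XZ1 Z1X.
have [YwZ2 Z2Yw] := w_eq (fun i => c (l + i)%N); rewrite -/Yw -/Z2 in YwZ2 Z2Yw.
have Z1Z : `|Z1| <= C * `|Z1 + Z2|.
  rewrite -Z_eq size_cat w_size.
  exact: (block_comb_le proj_le p_incr z_block c (leq_addr n l)).
have PYw : P N Yw = 0.
  rewrite proj_sum big1 // => i _.
  by rewrite projZ (proj_tail (w_tail _ (ltn_ord i))) scaler0.
have sN i : (i < l)%N -> `|s`_i - P N s`_i| <= del i by move=> il; exact: NP.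
have XS : `|X| <= 2 * C * `|X + Yw|.
  exact: norm_le_of_proj_close (seq_comb_proj_close K0 Z1X sN) PYw.
exact: ext_const_equiv K1 XZ1 Z1X Z1Z YwZ2 Z2Yw XS.
Qed.

Definition rank_const (k : nat) : R := iter k.+1 ext_const 1.

Lemma rank_const_ge1 k : 1 <= rank_const k.
Proof.
elim: k => [|k IH]; last exact: le_trans IH (ext_const_ge IH).
exact: le_trans (ext_const_ge (lexx 1)).
Qed.

Lemma rank_const_mono : {homo rank_const : k k' / (k <= k')%N >-> k <= k'}.
Proof.
apply: homo_leq => [//|? ? ? le12 le23|k]; first exact: le_trans le12 le23.
exact: ext_const_ge (rank_const_ge1 k).
Qed.

(* A node that can be prolonged by n vectors with constant K_(M-m) has rank
   at least omega * m + n in the tree with constant K_M: lowering n is done by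
   walking along the prolongation, lowering m by the extension lemma. *)
Lemma rho_ge_of_prolongable M m n s t K : (m <= M)%N -> 1 <= K -> K <= rank_const (M - m) ->
  emb_tree z Y K (s ++ t) -> (n <= size t)%N ->
  rho_ge (emb_tree z Y (rank_const M)) s (m, n).
Proof.
elim/ltn_ind: m => m IHm in n s t K *; elim/ltn_ind: n => n IHn in s t K *.
move=> mM K1 K_le st_tree n_le; have s_tree := emb_tree_prefix st_tree.
apply: RhoGe.
  apply: emb_tree_mono K1 _ s_tree.
  by apply: le_trans K_le (rank_const_mono (leq_subr _ _)).
move=> [m' n'] [/= m'm|/= [-> n'n]].
  have [[|x w] [//= [w_size]] w_tree] := emb_tree_extend K1 s_tree n'.+1.
  exists x, [::]; apply: (IHm m' m'm n' (s ++ [:: x]) w (ext_const K)).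
  - exact: leq_trans (ltnW m'm) mM.
  - exact: le_trans K1 (ext_const_ge K1).
  - have /rank_const_mono : ((M - m).+1 <= M - m')%N by lia.
    by apply: le_trans; exact: ext_const_mono.
  - by rewrite -catA.
  - by rewrite w_size.
case: t st_tree n_le => [|x t] st_tree n_le; first by have := leq_trans n'n n_le.
exists x, [::]; apply: (IHn n' n'n (s ++ [:: x]) t K mM K1 K_le); first by rewrite -catA.
by rewrite -ltnS (leq_trans n'n n_le).
Qed.

End Extension.

Theorem proposition1p4 (R : realType) (W : completeNormedModType R) (e : nat -> W) :
  schauder_basis e -> locally_minimal W -> omega2_minimal e.
Proof.
move=> basis_e [Klm [Klm1 loc_min]] z [p [a [p_incr [z_block z_neq0]]]] Y Y_idc [m n].
have [C C1 proj_le] := proj_uniform_bound basis_e.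
have [w [w_size w_tree]] := emb_tree_extend C1 proj_le p_incr z_block z_neq0 Y_idc Klm1 loc_min
  (lexx 1) (emb_tree_nil z Y 1) n.
exists (rank_const C Klm m); split; first exact: rank_const_ge1.
exists [::]; apply: (rho_ge_of_prolongable C1 proj_le p_incr z_block z_neq0 Y_idc Klm1 loc_min
  (leqnn m) _ _ w_tree).
- exact: (rank_const_ge1 C1 Klm1 0).
- by rewrite subnn.
- by rewrite w_size.
Qed.
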